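(* Each of the following posets has the Möbius uncertainty property: (i) the set $\mathbb{N}$ of positive integers ordered by divisibility; (ii) the set $\mathscr{F}(\mathbb{N})$ of finite subsets of $\mathbb{N}$ ordered by inclusion; (iii) the set $\mathscr{V}(\mathbb{F}_q^\infty)$ of finite-dimensional subspaces of $\mathbb{F}_q^\infty$ ordered by inclusion, for a finite field $\mathbb{F}_q$. Here a locally finite poset $P$ with minimum element has the Möbius uncertainty property if whenever $f,g:P\to\mathbb{C}$ are functions, neither identically zero, with $g(z)=\sum_{x\leqslant z} f(x)$ for all $z\in P$, at least one of $\operatorname{supp}(f)=\{x: f(x)\neq0\}$ and $\operatorname{supp}(g)=\{x: g(x)\neq 0\}$ is infinite.
   Context: $\mathbb{F}_q^\infty$ denotes the countably-infinite-dimensional vector space over $\mathbb{F}_q$ (finitely supported sequences over $\mathbb{F}_q$). All three posets are locally finite with a minimum element ($1$, $\emptyset$, $\{0\}$ respectively). *)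

From HB Require Import structures.
From mathcomp Require Import all_boot all_order all_algebra.
From mathcomp Require Import finmap.
From mathcomp Require Import boolp classical_sets functions cardinality fsbigop.
From mathcomp Require Import reals.
From mathcomp Require Import complex.

Set Implicit Arguments.
Unset Strict Implicit.
Unset Printing Implicit Defensive.
Import Order.TTheory GRing.Theory Num.Theory.

Local Open Scope classical_set_scope.
Local Open Scope ring_scope.

Definition supp (T : Type) (K : nzRingType) (h : T -> K) : set T :=
  [set x | h x != 0].

(* The sum over {x | x <= z} is the finitely-supported sum of fsbigop; the
   down-sets of the posets considered are finite, so it is the usual sum. *)
Definition mobius_uncertainty (R : realType) (T : choiceType)
    (le : T -> T -> Prop) : Prop :=
  forall f g : T -> R[i],
    (exists x, f x != 0) -> (exists x, g x != 0) ->
    (forall z, g z = \sum_(x \in [set x | le x z]) f x) ->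
    infinite_set (supp f) \/ infinite_set (supp g).

Definition posnat := {n : nat | (0 < n)%N}.
Definition pos_dvd (m n : posnat) : Prop := (val m %| val n)%N.

Definition fsub_incl (A B : {fset posnat}) : Prop := (A `<=` B)%fset.

(* (iii) finite-dimensional subspaces of F^\infty (finitely supported
   sequences nat -> F), ordered by inclusion. *)
Section Subspaces.
Variable F : finFieldType.

Definition fin_supported (v : nat -> F) : Prop :=
  exists N : nat, forall i : nat, (N <= i)%N -> v i = 0.

Definition span_of (s : seq (nat -> F)) : set (nat -> F) :=
  [set v | exists c : 'I_(size s) -> F,
     v = (fun i => \sum_(k < size s) c k * nth (fun _ => 0) s k i)].

Definition fd_subspace (S : set (nat -> F)) : Prop :=
  exists s : seq (nat -> F),
    (forall k, (k < size s)%N -> fin_supported (nth (fun _ => 0) s k)) /\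
    S = span_of s.

Record fdsub := FDSub { fdset : set (nat -> F); fdsetP : fd_subspace fdset }.

HB.instance Definition _ := gen_eqMixin fdsub.
HB.instance Definition _ := gen_choiceMixin fdsub.

Definition fdsub_incl (U V : fdsub) : Prop := fdset U `<=` fdset V.
End Subspaces.

From HB Require Import structures.
From mathcomp Require Import all_boot all_order all_algebra.
From mathcomp Require Import finmap.
From mathcomp Require Import boolp classical_sets functions cardinality fsbigop.
From mathcomp Require Import reals.
From mathcomp Require Import complex.

(** Suppose [supp f] and [supp g] are finite, [f] is nonzero, and let [m] be
    minimal in [supp f].  Each of the three posets is exhausted by an increasing
    family of "bounded" parts [P N], so both supports lie in one [P N].  Above
    [m] there is a point [z] outside [P N] that sees no point of [P N] below it
    except those below [m]: multiply [m] by a prime [p > N], add the element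
    [N + 1] to [m], adjoin to [m] the [N]-th unit vector.  By minimality the
    only point of [supp f] below [z] is [m], so [g z = f m <> 0] and [z] lies
    in [supp g], which is contained in [P N]: a contradiction. *)

Set Implicit Arguments.
Unset Strict Implicit.
Unset Printing Implicit Defensive.
Import Order.TTheory GRing.Theory Num.Theory.
Local Open Scope classical_set_scope.
Local Open Scope ring_scope.

Section UniformBound.
Variables (T : eqType) (P : nat -> T -> Prop).
Hypothesis P_mono : forall N N' x, (N <= N')%N -> P N x -> P N' x.
Hypothesis P_exhaust : forall x, exists N, P N x.

Lemma finite_set_uniform_bound (A : set T) : finite_set A -> exists N, A `<=` P N.
Proof.
move=> /finite_seqP [s ->]; elim: s => [|a s [Ns Ps]]; first by exists 0%N.
have [Na Pa] := P_exhaust a.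
exists (maxn Na Ns) => x /=; rewrite inE => /orP [/eqP -> | xs].
  exact: P_mono (leq_maxl _ _) Pa.
exact: P_mono (leq_maxr _ _) (Ps _ xs).
Qed.

End UniformBound.

Section Isolation.
Variables (T : choiceType) (le : T -> T -> Prop).
Hypothesis le_trans : forall x y z, le x y -> le y z -> le x z.
Hypothesis le_anti : forall x y, le x y -> le y x -> x = y.

Lemma cons_seq_minimal (b : T) (s : seq T) :
  exists2 m, m \in b :: s & forall x, x \in b :: s -> le x m -> x = m.
Proof.
elim: s b => [|c s IH] b.
  by exists b; rewrite ?mem_head // => x; rewrite inE => /eqP.
have [m ms m_min] := IH c.
case: (pselect (le b m)) => [bm | not_bm].
  exists b; rewrite ?mem_head // => x; rewrite inE => /orP [/eqP -> // | xs xb].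
  have xm := m_min x xs (le_trans xb bm); subst x.
  exact: le_anti.
exists m; first by rewrite inE ms orbT.
move=> x; rewrite inE => /orP [/eqP -> // | xs].
exact: m_min.
Qed.

Lemma finite_set_minimal (A : set T) a : finite_set A -> A a ->
  exists2 m, A m & forall x, A x -> le x m -> x = m.
Proof.
move=> /finite_seqP [[|b s] ->] //= _.
have [m ms m_min] := cons_seq_minimal b s.
by exists m.
Qed.

Variable P : nat -> T -> Prop.
Hypothesis P_mono : forall N N' x, (N <= N')%N -> P N x -> P N' x.
Hypothesis P_exhaust : forall x, exists N, P N x.
Hypothesis P_isolate : forall N m, P N m ->
  exists z, [/\ le m z, ~ P N z & forall x, P N x -> le x z -> le x m].

Theorem mobius_uncertainty_of_isolation (R : realType) : mobius_uncertainty R le.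
Proof.
move=> f g [x0 fx0] _ gE.
case: (pselect (finite_set (supp f))) => [fin_f|]; last by left.
case: (pselect (finite_set (supp g))) => [fin_g|]; last by right.
have [N suppN] : exists N, supp f `|` supp g `<=` P N.
  by apply: finite_set_uniform_bound; rewrite ?finite_setU.
have [m fm m_min] := finite_set_minimal fin_f fx0.
have [z [mz zN z_isolates]] := P_isolate (suppN m (or_introl fm)).
have only_m x : le x z -> f x != 0 -> x = m.
  by move=> xz fx; apply: m_min fx (z_isolates x (suppN x (or_introl fx)) xz).
have gz : g z = f m.
  rewrite gE -(fsbig_widen [set m]) ?fsbig_set1 // => [x -> // | x [xz xm] /=].
  by case: (eqVneq (f x) 0) => // /(only_m _ xz).
by case: zN; apply: suppN; right; rewrite /supp /= gz.
Qed.

End Isolation.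

Definition val_lt (N : nat) (x : posnat) : Prop := (val x < N)%N.

Lemma val_lt_mono N N' x : (N <= N')%N -> val_lt N x -> val_lt N' x.
Proof. by move=> NN' xN; apply: leq_trans xN NN'. Qed.

Lemma val_lt_exhaust x : exists N, val_lt N x.
Proof. by exists (val x).+1; rewrite /val_lt. Qed.

Lemma pos_dvd_trans (x y z : posnat) : pos_dvd x y -> pos_dvd y z -> pos_dvd x z.
Proof. exact: dvdn_trans. Qed.

Lemma pos_dvd_anti (x y : posnat) : pos_dvd x y -> pos_dvd y x -> x = y.
Proof. by move=> xy yx; apply/val_inj/eqP; rewrite eqn_dvd xy yx. Qed.

Lemma pos_dvd_isolate N m : val_lt N m ->
  exists z, [/\ pos_dvd m z, ~ val_lt N z &
    forall x, val_lt N x -> pos_dvd x z -> pos_dvd x m].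
Proof.
move=> mN; have [p Np p_prime] := prime_above N.
have mp_gt0 : (0 < val m * p)%N by rewrite muln_gt0 (valP m) prime_gt0.
exists (exist _ (val m * p)%N mp_gt0); split; rewrite /pos_dvd /val_lt /=.
- exact: dvdn_mulr.
- by apply/negP; rewrite -leqNgt (leq_trans (ltnW Np)) // leq_pmull // (valP m).
move=> x xN x_mp.
have x_lt_p : (val x < p)%N := ltn_trans xN Np.
have p_coprime : coprime (val x) p.
  rewrite coprime_sym prime_coprime //.
  by apply: contraTN x_lt_p => /(dvdn_leq (valP x)); rewrite leqNgt.
by rewrite -(Gauss_dvdl _ p_coprime).
Qed.

Lemma mobius_uncertainty_pos_dvd (R : realType) : mobius_uncertainty R pos_dvd.
Proof.
exact: (mobius_uncertainty_of_isolation pos_dvd_trans pos_dvd_anti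
          val_lt_mono val_lt_exhaust pos_dvd_isolate).
Qed.

Definition fset_below (N : nat) (A : {fset posnat}) : Prop :=
  forall y, y \in A -> val_lt N y.

Lemma fset_below_mono N N' A : (N <= N')%N -> fset_below N A -> fset_below N' A.
Proof. by move=> NN' AN y /AN; apply: val_lt_mono. Qed.

Lemma fset_below_exhaust A : exists N, fset_below N A.
Proof.
have [N AN] := finite_set_uniform_bound val_lt_mono val_lt_exhaust (finite_fset A).
by exists N => y /AN.
Qed.

Lemma fsub_incl_isolate N m :
  exists z, [/\ fsub_incl m z, ~ fset_below N z &
    forall x, fset_below N x -> fsub_incl x z -> fsub_incl x m].
Proof.
pose q : posnat := exist _ N.+1 (ltn0Sn N).
have q_above : ~ val_lt N q by rewrite /val_lt /= ltnNge leqW.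
exists (m `|` [fset q])%fset; split.
- exact: fsubsetUl.
- by move/(_ q); rewrite in_fsetU in_fset1 eqxx orbT => /(_ isT).
move=> x xN /fsubsetP xz; apply/fsubsetP => y yx.
have := xz y yx; rewrite in_fsetU in_fset1 => /orP [// | /eqP yq].
by case: q_above; rewrite -yq; apply: xN.
Qed.

Lemma mobius_uncertainty_fsub_incl (R : realType) : mobius_uncertainty R fsub_incl.
Proof.
apply: (mobius_uncertainty_of_isolation _ _ fset_below_mono fset_below_exhaust
          (fun N m _ => fsub_incl_isolate N m)).
- by move=> A B C AB BC; apply: fsubset_trans AB BC.
- by move=> A B AB BA; apply/eqP; rewrite eqEfsubset AB BA.
Qed.

Section FiniteDimensionalSubspaces.
Variable F : finFieldType.
Local Notation vec := (nat -> F).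

Definition adjoin (S : set vec) (e : vec) : set vec :=
  [set v | exists c, exists2 u, S u & v = (fun i => c * e i + u i)].

Lemma span_of_cons (s : seq vec) (e : vec) :
  span_of (e :: s) = adjoin (span_of s) e.
Proof.
apply/seteqP; split => v.
- move=> [c ->]; exists (c ord0).
    exists (fun i => \sum_(k < size s) c (lift ord0 k) * nth (fun _ => 0) s k i).
    by exists (fun k => c (lift ord0 k)).
  by apply: funext => i; rewrite big_ord_recl.
- move=> [c0 [u [c ->] ->]].
  exists (fun k : 'I_(size s).+1 => if unlift ord0 k is Some k' then c k' else c0).
  apply: funext => i; rewrite big_ord_recl /= unlift_none; congr (_ + _).
  by apply: eq_bigr => k _; rewrite liftK.
Qed.

Lemma fd_subspace_adjoin (S : set vec) (e : vec) :
  fin_supported e -> fd_subspace S -> fd_subspace (adjoin S e).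
Proof.
move=> e_fin [s [s_fin ->]]; exists (e :: s); split; last by rewrite span_of_cons.
by case=> [|k] //= /s_fin.
Qed.

Definition fdsub_adjoin (U : fdsub F) (e : vec) (e_fin : fin_supported e) : fdsub F :=
  FDSub (fd_subspace_adjoin e_fin (fdsetP U)).

Lemma sub_adjoin (S : set vec) (e : vec) : S `<=` adjoin S e.
Proof. by move=> u Su; exists 0; exists u => //; apply: funext => i; rewrite mul0r add0r. Qed.

Lemma fd_subspace0 (S : set vec) : fd_subspace S -> S (fun _ => 0).
Proof.
move=> [s [_ ->]]; exists (fun _ => 0).
by apply: funext => i; rewrite big1 // => k _; rewrite mul0r.
Qed.

Definition unitv (q : nat) : vec := fun i => if i == q then 1 else 0.

Lemma unitv_fin q : fin_supported (unitv q).
Proof. by exists q.+1 => i qi; rewrite /unitv gtn_eqF. Qed.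

Definition vanish_from (N : nat) (U : fdsub F) : Prop :=
  forall v, fdset U v -> forall i, (N <= i)%N -> v i = 0.

Lemma vanish_from_mono N N' U : (N <= N')%N -> vanish_from N U -> vanish_from N' U.
Proof. by move=> NN' UN v Uv i N'i; apply: UN Uv _ (leq_trans NN' N'i). Qed.

Lemma vanish_from_exhaust U : exists N, vanish_from N U.
Proof.
case: U => S [s [s_fin S_span]].
have vanish_mono N N' (k : 'I_(size s)) : (N <= N')%N ->
    (forall i, (N <= i)%N -> nth (fun _ => 0) s k i = 0) ->
    forall i, (N' <= i)%N -> nth (fun _ => 0) s k i = 0.
  by move=> NN' kN i N'i; apply: kN (leq_trans NN' N'i).
have [N sN] := finite_set_uniform_bound vanish_mono
  (fun k => s_fin k (ltn_ord k)) (@finite_finset _ setT).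
exists N => v; rewrite /= S_span => -[c ->] i Ni.
by rewrite big1 // => k _; rewrite (sN k) // mulr0.
Qed.

Lemma fdsub_incl_isolate N U : vanish_from N U ->
  exists Z, [/\ fdsub_incl U Z, ~ vanish_from N Z &
    forall X, vanish_from N X -> fdsub_incl X Z -> fdsub_incl X U].
Proof.
move=> UN; exists (fdsub_adjoin U (unitv_fin N)); split.
- exact: sub_adjoin.
- move=> ZN; have : unitv N N = 0.
    apply: ZN (leqnn N); exists 1; exists (fun _ => 0).
      exact: fd_subspace0 (fdsetP U).
    by apply: funext => i; rewrite mul1r addr0.
  by rewrite /unitv eqxx; apply/eqP/oner_neq0.
move=> X XN XZ v Xv; have [c [u Uu vE]] := XZ v Xv.
have c0 : c = 0.
  have := XN v Xv N (leqnn N); rewrite vE /unitv eqxx mulr1.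
  by rewrite (UN u Uu N (leqnn N)) addr0.
by rewrite vE c0; under eq_fun do rewrite mul0r add0r.
Qed.

Lemma fdsub_incl_anti (U V : fdsub F) : fdsub_incl U V -> fdsub_incl V U -> U = V.
Proof.
case: U V => [S S_fd] [S' S'_fd]; rewrite /fdsub_incl /= => SS' S'S.
have E : S = S' by apply/seteqP; split.
by subst S'; rewrite (Prop_irrelevance S_fd S'_fd).
Qed.

Lemma mobius_uncertainty_fdsub_incl (R : realType) :
  mobius_uncertainty R (@fdsub_incl F).
Proof.
apply: (mobius_uncertainty_of_isolation _ fdsub_incl_anti vanish_from_mono
          vanish_from_exhaust fdsub_incl_isolate).
by move=> U V W UV VW; apply: subset_trans UV VW.
Qed.

End FiniteDimensionalSubspaces.

Theorem corollary1p3 (R : realType) :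
  mobius_uncertainty R pos_dvd /\
  mobius_uncertainty R fsub_incl /\
  (forall F : finFieldType, mobius_uncertainty R (@fdsub_incl F)).
Proof.
split; first exact: mobius_uncertainty_pos_dvd.
split; first exact: mobius_uncertainty_fsub_incl.
move=> F; exact: mobius_uncertainty_fdsub_incl.
Qed.
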